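(* Let $(\mathcal{F}_\alpha)_{\alpha<\omega_1}$ be a transfinite family, $\mathcal{A}\subset[\mathbb{N}]^{<\infty}$ hereditary and $P\subset\mathbb{N}$ infinite. Suppose that for every $\alpha<\omega_1$ there is an infinite $N_\alpha\subset P$ with $\mathcal{F}_\alpha^{N_\alpha}\subset\mathcal{A}$. Then there is an infinite $L\subset P$ such that $[L]^{<\infty}\subset\mathcal{A}$.
   Context: An approximating family assigns to each countable limit ordinal $\alpha$ finite sets $A_n(\alpha)\subset[0,\alpha)$, $n\in\mathbb{N}$, with $A_n(\alpha)\subset A_{n+1}(\alpha)$ and $\lim_n\max A_n(\alpha)=\alpha$. The transfinite family it defines: $\mathcal{F}_0=\{\emptyset\}$; $\mathcal{F}_{\beta+1}=\{\{n\}\cup E:n\in\mathbb{N},E\in\mathcal{F}_\beta\}\cup\{\emptyset\}$; for limit $\alpha$, $\mathcal{F}_\alpha=\{\emptyset\}\cup\{E\ne\emptyset:E\in\bigcup_{\beta\in A_{\min E}(\alpha)}\mathcal{F}_\beta\}$. For $N=\{n_1<n_2<\dots\}$, $\mathcal{F}^N=\{\{n_i:i\in E\}:E\in\mathcal{F}\}$. $[L]^{<\infty}$ denotes the finite subsets of $L$; hereditary = closed under subsets. *)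

(* countable ordinals are modelled by an abstract copy of omega_1. *)
From mathcomp Require Import all_boot finmap.
From Stdlib Require List.
Notation In := List.In.

Set Implicit Arguments.
Unset Strict Implicit.
Unset Printing Implicit Defensive.

Local Open Scope fset_scope.

(* (O, lt) is (order-isomorphic to) omega_1: a strict well-order which is
   uncountable and all of whose proper initial segments are countable.
   This characterizes omega_1 up to order isomorphism. *)
Definition is_omega1 (O : Type) (lt : O -> O -> Prop) : Prop :=
  (forall a, ~ lt a a) /\
  (forall a b c, lt a b -> lt b c -> lt a c) /\
  (forall a b, lt a b \/ a = b \/ lt b a) /\
  well_founded lt /\
  (~ exists f : O -> nat, forall x y, f x = f y -> x = y) /\
  (forall a, exists f : O -> nat,
          forall x y, lt x a -> lt y a -> f x = f y -> x = y).

Definition is_zero_ord (O : Type) (lt : O -> O -> Prop) (a : O) : Prop :=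
  forall b, ~ lt b a.

Definition is_succ_of (O : Type) (lt : O -> O -> Prop) (a b : O) : Prop :=
  lt b a /\ (forall c, lt b c -> ~ lt c a).

Definition is_limit_ord (O : Type) (lt : O -> O -> Prop) (a : O) : Prop :=
  ~ is_zero_ord lt a /\ ~ (exists b, is_succ_of lt a b).

(* A a n is the finite set A_n(a) (as a list) *)
Definition approximating_family (O : Type) (lt : O -> O -> Prop)
  (A : O -> nat -> List.list O) : Prop :=
  forall a, is_limit_ord lt a ->
    [/\ (forall n b, In b (A a n) -> lt b a),
        (forall n b, In b (A a n) -> In b (A a n.+1)),
        (forall n, A a n <> nil)
      & (* lim_n max A_n(a) = a *)
        (forall b, lt b a -> exists n0, forall n, n0 <= n ->
            exists c, In c (A a n) /\ lt b c)].

(* F satisfies the defining transfinite recursion; by well-foundedness it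
   is uniquely determined by A. *)
Definition is_transfinite_family (O : Type) (lt : O -> O -> Prop)
  (A : O -> nat -> List.list O) (F : O -> {fset nat} -> Prop) : Prop :=
  forall a,
    [/\ (is_zero_ord lt a -> forall E, F a E <-> E = fset0),
        (forall b, is_succ_of lt a b -> forall E,
            F a E <-> (E = fset0 \/ exists n E', F b E' /\ E = n |` E'))
      & (is_limit_ord lt a -> forall E,
            F a E <-> (E = fset0 \/
               (E <> fset0 /\ exists m, m \in E /\ (forall x, x \in E -> m <= x)
                   /\ exists b, In b (A a m) /\ F b E)))].

Definition hereditary (Acal : {fset nat} -> Prop) : Prop :=
  forall E E', Acal E -> E' `<=` E -> Acal E'.

Definition infinite_set (P : nat -> Prop) : Prop :=
  forall m, exists n, m <= n /\ P n.

(* F^N subset of Acal, where N = {e 0 < e 1 < ...} *)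
Definition spread_subset (e : nat -> nat) (F : {fset nat} -> Prop)
  (Acal : {fset nat} -> Prop) : Prop :=
  forall E, F E -> Acal [fset e i | i in E].

(* Grow the tree of finite sets s ⊂ P in Acal, each node extended by points
   above its maximum.  An infinite branch yields L.  If the tree is well
   founded, induction along it shows that for every node s the ordinals a for
   which s ∪ F_a^e ⊂ Acal for some increasing e in P are bounded below ω₁:
   at a successor a = b+1 one passes to the child s ∪ {e k}, at a limit a to
   some c ∈ A_n(a) above the bound (F_c, shifted past n, lies in F_a), and a
   node has only countably many children.  At the root this contradicts the
   hypothesis, which holds for every a. *)

From mathcomp Require Import all_boot finmap.
From Stdlib Require Import Classical ClassicalEpsilon.

Set Implicit Arguments.
Unset Strict Implicit.
Unset Printing Implicit Defensive.

Local Open Scope fset_scope.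

Section Omega1.

Variables (O : Type) (lt : O -> O -> Prop).
Hypothesis omega1 : is_omega1 lt.

Lemma omega1_inhabited : inhabited O.
Proof.
apply: NNPP => nO; case: omega1 => [_ [_ [_ [_ [uncountable _]]]]].
by apply: uncountable; exists (fun _ => 0) => x; case: nO.
Qed.

Lemma omega1_lt_not_ge {a b : O} : lt a b -> ~ (lt b a \/ b = a).
Proof.
case: omega1 => [irr [trans _]] lt_ab [lt_ba|eq_ba]; first exact: irr (trans _ _ _ lt_ab lt_ba).
by rewrite eq_ba in lt_ab; apply: irr lt_ab.
Qed.

Lemma omega1_countable_bounded (f : nat -> O) : exists d, forall n, lt (f n) d.
Proof.
case: omega1 => [_ [_ [total [_ [uncountable segment_countable]]]]].
apply: NNPP => unbounded; apply: uncountable.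
have below_f x : exists n, lt x (f n) \/ x = f n.
  apply: NNPP => nx; apply: unbounded; exists x => n.
  by case: (total (f n) x) => [//|[ex|lx]]; case: nx; exists n; [right|left].
have [g gP] := choice _ below_f.
have [h hP] := choice _ segment_countable.
(* x sits at or below f (g x); code it by g x and its rank below f (g x) *)
pose c x := if excluded_middle_informative (x = f (g x)) then 0 else (h (f (g x)) x).+1.
exists (fun x => choice.pickle (g x, c x)) => x y /(pcan_inj choice.pickleK_inv) [gxy].
rewrite /c; case: excluded_middle_informative => ex;
  case: excluded_middle_informative => ey //.
- by move=> _; rewrite ex ey gxy.
- move=> [hxy]; case: (gP x) => [lx|//]; case: (gP y) => [ly|//].
  by rewrite gxy in lx hxy; apply: hP lx ly hxy.
Qed.

End Omega1.

Lemma ord_trichotomy (O : Type) (lt : O -> O -> Prop) (a : O) :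
  [\/ is_zero_ord lt a, exists b, is_succ_of lt a b | is_limit_ord lt a].
Proof.
case: (classic (is_zero_ord lt a)) => [|nonzero]; first by constructor 1.
case: (classic (exists b, is_succ_of lt a b)) => [|nonsucc]; first by constructor 2.
by constructor 3.
Qed.

Definition fshift (k : nat) (E : {fset nat}) : {fset nat} := [fset (i + k)%N | i in E].

Lemma fshift0 k : fshift k fset0 = fset0.
Proof. exact: imfset0. Qed.

Lemma fshiftU1 k n E : fshift k (n |` E) = (n + k)%N |` fshift k E.
Proof. exact: imfsetU1. Qed.

Lemma fshift_ge k E x : x \in fshift k E -> k <= x.
Proof. by case/imfsetP => i _ ->; rewrite leq_addl. Qed.

Section TransfiniteFamily.

Variables (O : Type) (lt : O -> O -> Prop).
Variables (A : O -> nat -> List.list O) (F : O -> {fset nat} -> Prop).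
Hypothesis approxA : approximating_family lt A.
Hypothesis familyF : is_transfinite_family lt A F.

Lemma approximating_mono a m n b :
  is_limit_ord lt a -> m <= n -> In b (A a m) -> In b (A a n).
Proof.
move=> limit_a /subnKC <-; case: (approxA limit_a) => _ A_step _ _.
elim: (n - m) => [|j IH] Ab; first by rewrite addn0.
by rewrite addnS; apply/A_step/IH.
Qed.

Lemma transfinite_family_fset0 a : F a fset0.
Proof.
case: (familyF a) => F0 FS FL.
case: (ord_trichotomy lt a) => [zero_a|[b succ_ab]|limit_a].
- exact/(F0 zero_a).
- by apply/(FS b succ_ab); left.
- by apply/(FL limit_a); left.
Qed.

Lemma transfinite_family_cons a b n E :
  is_succ_of lt a b -> F b E -> F a (n |` E).
Proof.
move=> succ_ab FbE; case: (familyF a) => _ FS _.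
by apply/(FS b succ_ab); right; exists n, E.
Qed.

Lemma transfinite_family_limit a c n E :
  is_limit_ord lt a -> In c (A a n) -> F c E -> (forall x, x \in E -> n <= x) ->
  F a E.
Proof.
move=> limit_a Ac FcE E_ge; case: (familyF a) => _ _ FL; apply/(FL limit_a).
case: (fset_0Vmem E) => [->|[x xE]]; [by left | right].
have E_inhabited : exists m, m \in E by exists x.
split; first by move=> E0; rewrite E0 in xE.
case: (ex_minnP E_inhabited) => m mE m_min.
exists m; split=> //; split=> //; exists c; split=> //.
exact: approximating_mono (E_ge m mE) Ac.
Qed.

Hypothesis wf_lt : well_founded lt.

Lemma transfinite_family_fshift a k E : F a E -> F a (fshift k E).
Proof.
elim/(well_founded_ind wf_lt): a E => a IH E.
case: (familyF a) => F0 FS FL.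
case: (ord_trichotomy lt a) => [zero_a|[b succ_ab]|limit_a].
- by move/(F0 zero_a) => ->; rewrite fshift0; apply: transfinite_family_fset0.
- case/(FS b succ_ab) => [->|[n [E' [FbE' ->]]]].
    by rewrite fshift0; apply: transfinite_family_fset0.
  rewrite fshiftU1; apply: (transfinite_family_cons _ succ_ab).
  by apply: IH FbE'; case: succ_ab.
- case/(FL limit_a) => [->|[_ [m [mE [m_min [c [Ac FcE]]]]]]].
    by rewrite fshift0; apply: transfinite_family_fset0.
  case: (approxA limit_a) => lt_A _ _ _.
  apply: (transfinite_family_limit (c := c) (n := (m + k)%N)) => //.
  - exact: approximating_mono limit_a (leq_addr k m) Ac.
  - exact: IH (lt_A _ _ Ac) _ FcE.
  - by move=> _ /imfsetP [x /= xE ->]; rewrite leq_add2r m_min.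
Qed.

Lemma transfinite_family_fshift_limit a c n E :
  is_limit_ord lt a -> In c (A a n) -> F c E -> F a (fshift n E).
Proof.
move=> limit_a Ac FcE; apply: transfinite_family_limit limit_a Ac _ (@fshift_ge n E).
exact: transfinite_family_fshift.
Qed.

End TransfiniteFamily.

Section SpreadingTree.

Variables (Acal : {fset nat} -> Prop) (P : nat -> Prop).

Definition tree_child (t s : {fset nat}) : Prop :=
  exists n, [/\ P n, forall x, x \in s -> x < n, Acal t & t = n |` s].

Definition spreads_within (s : {fset nat}) (G : {fset nat} -> Prop) : Prop :=
  exists e : nat -> nat, [/\ forall i, e i < e i.+1, forall i, P (e i)
    & forall E, G E -> Acal (s `|` [fset e i | i in E])].

Lemma increasing_ge_id (e : nat -> nat) : (forall i, e i < e i.+1) -> forall k, k <= e k.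
Proof. by move=> e_incr; elim=> // k IH; apply: leq_ltn_trans IH (e_incr k). Qed.

Lemma spreads_within_child s G G' :
  spreads_within s G' -> G fset0 -> (forall n E, G E -> G' (n |` E)) ->
  exists2 n, tree_child (n |` s) s & spreads_within (n |` s) G.
Proof.
move=> [e [e_incr Pe spreadG']] G0 G_cons.
pose k := (\max_(i <- s) i).+1.
have spread_cons E : G E -> Acal ((e k |` s) `|` [fset e i | i in E]).
  by move/(G_cons k)/spreadG'; rewrite imfsetU1 fsetUA [s `|` _]fsetUC.
exists (e k); last by exists e.
exists (e k); split=> //.
- move=> x xs; apply: leq_ltn_trans (increasing_ge_id e_incr k).
  exact: (@leq_bigmax_seq _ _ xpredT id x).
- by have := spread_cons _ G0; rewrite imfset0 fsetU0.
Qed.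

Lemma spreads_within_fshift s G G' k :
  spreads_within s G' -> (forall E, G E -> G' (fshift k E)) -> spreads_within s G.
Proof.
move=> [e [e_incr Pe spreadG']] G_shift; exists (fun i => e (i + k)%N); split=> //.
by move=> E /G_shift /spreadG'; rewrite /fshift -imfset_comp.
Qed.

Lemma tree_chain_branch (S : nat -> {fset nat}) :
  hereditary Acal -> S 0 = fset0 -> (forall k, tree_child (S k.+1) (S k)) ->
  exists L : nat -> Prop, infinite_set L /\ (forall n, L n -> P n) /\
    (forall E : {fset nat}, (forall x, x \in E -> L x) -> Acal E).
Proof.
move=> hered S0 S_child.
have S_mono : {homo S : i j / i <= j >-> i `<=` j}.
  apply: homo_leq => [X|Y X Z|k]; [exact: fsubset_refl|exact: fsubset_trans|].
  by have [n [_ _ _ ->]] := S_child k; apply: fsubsetU1.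
have S_Acal k : Acal (S k).
  case: k => [|k]; last by have [n [_ _ ? _]] := S_child k.
  by have [n [_ _ S1 _]] := S_child 0; apply: hered S1 _; rewrite S0 fsub0set.
have S_P k x : x \in S k -> P x.
  elim: k x => [|k IH] x; first by rewrite S0 inE.
  by have [n [Pn _ _ ->]] := S_child k; case/fset1UP => [->|/IH].
have S_large k : exists2 x, x \in S k.+1 & k <= x.
  elim: k => [|k [x xS kx]].
    by have [n [_ _ _ ->]] := S_child 0; exists n; rewrite ?fset1U1.
  have [n [_ n_gt _ ->]] := S_child k.+1.
  by exists n; [rewrite fset1U1 | apply: leq_ltn_trans kx (n_gt x xS)].
have S_cover (l : seq nat) : (forall x, x \in l -> exists k, x \in S k) ->
    exists K, {subset l <= S K}.
  elim: l => [|x l IH] l_in; first by exists 0.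
  have [kx xS] := l_in x (mem_head x l).
  have [K lS] : exists K, {subset l <= S K}.
    by apply: IH => y yl; apply: l_in; rewrite inE yl orbT.
  exists (maxn kx K) => y; rewrite inE => /predU1P [->|/lS].
    exact: (fsubsetP (S_mono _ _ (leq_maxl kx K))).
  exact: (fsubsetP (S_mono _ _ (leq_maxr kx K))).
exists (fun x => exists k, x \in S k); split; last split.
- by move=> m; have [x xS mx] := S_large m; exists x; split=> //; exists m.+1.
- by move=> x [k]; apply: S_P.
- move=> E E_in; have [K ES] := S_cover E E_in.
  by apply: hered (S_Acal K) _; apply/fsubsetP.
Qed.

End SpreadingTree.

Lemma not_acc_chain (T : Type) (R : T -> T -> Prop) (x : T) :
  ~ Acc R x -> exists S : nat -> T, S 0 = x /\ forall k, R (S k.+1) (S k).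
Proof.
move=> nacc_x.
have step (y : {y | ~ Acc R y}) : exists z : {z | ~ Acc R z}, R (proj1_sig z) (proj1_sig y).
  case: y => y nacc_y; apply: NNPP => no_step; apply: (nacc_y); constructor => z Rzy.
  by apply: NNPP => nacc_z; apply: no_step; exists (exist _ z nacc_z).
have [next nextP] := choice _ step.
by exists (fun k => proj1_sig (iter k next (exist _ x nacc_x))); split=> // k; apply: nextP.
Qed.

Section BoundedSpreading.

Variables (O : Type) (lt : O -> O -> Prop).
Variables (A : O -> nat -> List.list O) (F : O -> {fset nat} -> Prop).
Variables (Acal : {fset nat} -> Prop) (P : nat -> Prop).
Hypothesis omega1 : is_omega1 lt.
Hypothesis approxA : approximating_family lt A.
Hypothesis familyF : is_transfinite_family lt A F.

Lemma tree_acc_spreads_bounded s :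
  Acc (tree_child Acal P) s ->
  exists d, forall a, spreads_within Acal P s (F a) -> lt a d \/ a = d.
Proof.
have [o] := omega1_inhabited omega1.
have [_ [trans [total [wf_lt _]]]] := omega1.
elim=> {}s _ IH.
have child_bound n : exists d, forall a, tree_child Acal P (n |` s) s ->
    spreads_within Acal P (n |` s) (F a) -> lt a d \/ a = d.
  case: (classic (tree_child Acal P (n |` s) s)) => [/IH [d dP]|no_child].
    by exists d => a _; apply: dP.
  by exists o => a /no_child.
have [f fP] := choice _ child_bound.
have [d f_lt_d] := omega1_countable_bounded omega1 f.
exists d => a; elim/(well_founded_ind wf_lt): a => a IHa spread_a.
case: (total a d) => [|[]]; [by left | by right | move=> lt_da; exfalso].
case: (ord_trichotomy lt a) => [zero_a|[b succ_ab]|limit_a].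
- exact: zero_a lt_da.
- have [n child_n spread_b] := spreads_within_child spread_a
    (transfinite_family_fset0 familyF b)
    (fun n E => transfinite_family_cons (E := E) familyF n succ_ab).
  have lt_bd : lt b d.
    by case: (fP n b child_n spread_b) => [lt_bf|->]; [apply: trans lt_bf _|]; apply: f_lt_d.
  by case: succ_ab => _ /(_ d lt_bd).
- case: (approxA limit_a) => lt_A _ _ cofinal.
  have [n0 n0P] := cofinal d lt_da.
  have [c [Ac lt_dc]] := n0P n0 (leqnn n0).
  have spread_c : spreads_within Acal P s (F c).
    apply: spreads_within_fshift spread_a _ => E.
    exact: transfinite_family_fshift_limit limit_a Ac.
  exact: (omega1_lt_not_ge omega1 lt_dc (IHa c (lt_A _ _ Ac) spread_c)).
Qed.

End BoundedSpreading.

Theorem corollary4p5 (O : Type) (lt : O -> O -> Prop)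
  (A : O -> nat -> List.list O) (F : O -> {fset nat} -> Prop)
  (Acal : {fset nat} -> Prop) (P : nat -> Prop) :
  is_omega1 lt ->
  approximating_family lt A ->
  is_transfinite_family lt A F ->
  hereditary Acal ->
  infinite_set P ->
  (forall a : O, exists e : nat -> nat,
      (forall i, e i < e i.+1) /\ (forall i, P (e i)) /\
      spread_subset e (F a) Acal) ->
  exists L : nat -> Prop, infinite_set L /\ (forall n, L n -> P n) /\
    (forall E : {fset nat}, (forall x, x \in E -> L x) -> Acal E).
Proof.
move=> omega1 approxA familyF hered _ spreads.
have spreads_root a : spreads_within Acal P fset0 (F a).
  have [e [e_incr [Pe spread_e]]] := spreads a.
  by exists e; split=> // E /spread_e; rewrite fset0U.
case: (classic (Acc (tree_child Acal P) fset0)) => [acc_root|nacc_root].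
  have [d bound_d] := tree_acc_spreads_bounded omega1 approxA familyF acc_root.
  have [d' lt_dd'] := omega1_countable_bounded omega1 (fun _ => d).
  by case: (omega1_lt_not_ge omega1 (lt_dd' 0) (bound_d d' (spreads_root d'))).
have [S [S0 S_child]] := not_acc_chain nacc_root.
exact: tree_chain_branch hered S0 S_child.
Qed.
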